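(* Let $G$ be a group with a conjugation-closed generating set $X$, let $g\in\mathrm{Mon}(X)$ and $n=\ell(g)$. The maps $L\colon\mathrm{Fact}(G,g,\mathbf I)\to\mathrm{Comp}(\mathbb Z,n,\mathbf I)$ and $\overline L\colon\mathrm{Fact}(G,g,\mathbf S)\to\mathrm{Comp}(\mathbb Z,n,\mathbf S)$ are surjective order-preserving maps, and $\overline L\circ q=q\circ L$.
   Context: $\mathrm{Mon}(X)$ is the generated submonoid; $\ell(x)$ is the minimal length of a product of elements of $X$ equal to $x$. A linear factorization of $g$ is a row vector $[x_L\ x_1\ \cdots\ x_k\ x_R]$ ($k\ge0$) of elements of $\mathrm{Mon}(X)$ with $x_1,\dots,x_k\ne1$, $\ell(x_L)+\sum_i\ell(x_i)+\ell(x_R)=\ell(g)$ and $x_Lx_1\cdots x_kx_R=g$. With $x_0=x_L$, $x_{k+1}=x_R$, the merge at position $i\in\{0,\dots,k\}$ replaces $x_i,x_{i+1}$ by the single entry $x_ix_{i+1}$. $\mathrm{Fact}(G,g,\mathbf I)$ is the set of linear factorizations ordered by $\mathbf x\le\mathbf y$ iff $\mathbf x$ is obtained from $\mathbf y$ by merges. Two linear factorizations $[x_L\ x_1\cdots x_k\ x_R]$ and $[y_L\ y_1\cdots y_k\ y_R]$ of the same length are equivalent iff $x_i=y_i$ for $1\le i\le k$; the classes are circular factorizations, $\mathrm{Fact}(G,g,\mathbf S)$ is the set of classes with $\bar{\mathbf x}\le\bar{\mathbf y}$ iff $\mathbf x'\le\mathbf y'$ for some representatives, and $q$ is the quotient map.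 Each class has a unique representative with last entry $1$, namely $[gx_Rg^{-1}x_L\ x_1\cdots x_k\ 1]$. For $G=\mathbb Z$, $X=\{1\}$ (additive notation) these are linear compositions $\mathrm{Comp}(\mathbb Z,n,\mathbf I)$ and circular compositions $\mathrm{Comp}(\mathbb Z,n,\mathbf S)$, with quotient map also denoted $q$. $L([x_L\ x_1\cdots x_k\ x_R])=[\ell(x_L)\ \ell(x_1)\cdots\ell(x_k)\ \ell(x_R)]$, and $\overline L$ sends the class with representative $[x_L\ x_1\cdots x_k\ 1]$ to the class of $[\ell(x_L)\ \ell(x_1)\cdots\ell(x_k)\ 0]$. *)

From mathcomp Require Import all_boot all_algebra.
From Stdlib Require Import ClassicalEpsilon Relation_Operators.
Set Implicit Arguments. Unset Strict Implicit. Unset Printing Implicit Defensive.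
Import GRing.Theory.

Record group := Group {
  gT :> Type;
  gmul : gT -> gT -> gT;
  gone : gT;
  ginv : gT -> gT;
  gmulA : forall x y z, gmul x (gmul y z) = gmul (gmul x y) z;
  gmul1 : forall x, gmul gone x = x;
  gmulV : forall x, gmul (ginv x) x = gone }.

Section Defs.
Variable G : group.
Local Notation "x * y" := (gmul x y).
Local Notation one := (gone G).

Definition gprod (s : seq G) : G := foldr (@gmul G) one s.

Definition conj_closed (X : G -> Prop) :=
  forall x y, X x -> X (ginv y * (x * y)).

Definition generates (X : G -> Prop) :=
  forall y : G, exists s : seq (G * bool),
    (forall p, List.In p s -> X p.1) /\
    gprod (map (fun p => if p.2 then ginv p.1 else p.1) s) = y.

Definition Mon (X : G -> Prop) (x : G) :=
  exists s : seq G, (forall y, List.In y s -> X y) /\ gprod s = x.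

Definition is_len (X : G -> Prop) (x : G) (n : nat) :=
  (exists s : seq G, (forall y, List.In y s -> X y) /\ gprod s = x /\ size s = n) /\
  (forall s : seq G, (forall y, List.In y s -> X y) -> gprod s = x -> n <= size s).

(* ell(x): the word length of x (meaningful for x in Mon(X)) *)
Definition ell (X : G -> Prop) (x : G) : nat :=
  epsilon (inhabits 0%N) (is_len X x).

(* A linear factorization [x_L x_1 ... x_k x_R] is a list of size k+2. *)
Definition LinFact (X : G -> Prop) (g : G) (s : seq G) :=
  [/\ 2 <= size s,
      (forall y, List.In y s -> Mon X y),
      (forall i, 0 < i < (size s).-1 -> nth one s i <> one),
      sumn (map (ell X) s) = ell X g
    & gprod s = g].

Definition merge (i : nat) (s : seq G) : seq G :=
  take i s ++ (nth one s i * nth one s i.+1) :: drop i.+2 s.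

Definition merge_step (s t : seq G) :=
  exists i, i.+1 < size t /\ s = merge i t.

Definition fact_le (s t : seq G) := clos_refl_trans _ merge_step s t.

Definition circ_equiv (s t : seq G) :=
  size s = size t /\ (forall i, 0 < i < (size s).-1 -> nth one s i = nth one t i).

Definition qmap (X : G -> Prop) (g : G) (s : seq G) : seq G -> Prop :=
  fun t => LinFact X g t /\ circ_equiv s t.

(* circular factorizations = classes *)
Definition CircFact (X : G -> Prop) (g : G) (C : seq G -> Prop) :=
  exists s, LinFact X g s /\ C = qmap X g s.

Definition circ_le (C D : seq G -> Prop) :=
  exists s t, C s /\ D t /\ fact_le s t.

End Defs.

Definition Zgroup : group :=
  @Group int (fun a b => a + b)%R 0%R (fun a => - a)%R
    (fun x y z => addrA x y z) (fun x => add0r x) (fun x => addNr x).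

Definition Zgen (a : Zgroup) : Prop := a = 1%R.

(* Comp(Z,n,I) and Comp(Z,n,S) are Fact(Z,n,I) and Fact(Z,n,S) for X = {1}. *)
Definition Comp_I (n : nat) (c : seq Zgroup) := LinFact Zgen ((Posz n) : Zgroup) c.
Definition Comp_S (n : nat) (C : seq Zgroup -> Prop) :=
  CircFact Zgen ((Posz n) : Zgroup) C.

Definition Lmap (G : group) (X : G -> Prop) (s : seq G) : seq Zgroup :=
  map (fun x => ((Posz (ell X x)) : Zgroup)) s.

Definition Lbar (G : group) (X : G -> Prop) (g : G) (C : seq G -> Prop)
  : seq Zgroup -> Prop :=
  fun t => exists s, C s /\ last (gone G) s = gone G /\
           qmap Zgen ((Posz (ell X g)) : Zgroup) (Lmap X s) t.

From Pilot Require Import Defs.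
From mathcomp Require Import all_boot all_algebra zify.
From Stdlib Require Import Relation_Operators ClassicalEpsilon.
From Stdlib Require Import FunctionalExtensionality PropExtensionality.
From Stdlib Require List Wf_nat Classical_Prop.
Set Implicit Arguments. Unset Strict Implicit. Unset Printing Implicit Defensive.

(* Everything rests on the triangle inequality l(x_1...x_m) <= l(x_1) + ... + l(x_m)
   and its equality case.  A merge of a factorization whose lengths add up to l(g)
   keeps them adding up, so L commutes with merges.  For surjectivity, cut a
   geodesic word for g into consecutive pieces of the prescribed sizes: each piece
   has length at most its size and the sizes add up to l(g), so every piece is
   geodesic.  Finally, conjugation-closedness gives l(g x_R g^-1) <= l(x_R), so
   [x_L x_1 ... x_k x_R] and [g x_R g^-1 x_L x_1 ... x_k 1] are both geodesic;
   this provides the representatives ending in 1 that make Lbar o q = q o L. *)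

Notation all_in P s := (forall y, List.In y s -> P y).

Section Lists.
Variable T : Type.

Lemma In_nth (x0 : T) s i : i < size s -> List.In (nth x0 s i) s.
Proof. by elim: s i => [|x s IH] [|i] //= lt_i; [left | right; apply: IH]. Qed.

Lemma In_rcons (x y : T) s : List.In y (rcons s x) <-> List.In y s \/ x = y.
Proof. by rewrite -cats1 List.in_app_iff /=; intuition. Qed.

Lemma In_flatten (ss : seq (seq T)) p y :
  List.In p ss -> List.In y p -> List.In y (flatten ss).
Proof. by elim: ss => [|q ss IH] //= [<- | ss_p] p_y; apply/List.in_app_iff; auto. Qed.

Lemma In_reshape (ns : seq nat) (w : seq T) p y :
  sumn ns = size w -> List.In p (reshape ns w) -> List.In y p -> List.In y w.
Proof.
move=> sum_ns ps_p p_y; rewrite -(@reshapeKr _ ns w) ?sum_ns //.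
exact: In_flatten ps_p p_y.
Qed.

Lemma split_ends (s : seq T) : 1 < size s -> exists xL mid xR, s = xL :: rcons mid xR.
Proof.
case: s => [|xL t] //=; case/lastP: t => [|mid xR] // _.
by exists xL, mid, xR.
Qed.

Lemma split_pair_at (x0 : T) i (t : seq T) : i.+1 < size t ->
  exists a x y b, t = a ++ x :: y :: b /\ size a = i.
Proof.
move=> lt_it; have lt_i := ltnW lt_it.
exists (take i t), (nth x0 t i), (nth x0 t i.+1), (drop i.+2 t).
by rewrite -!drop_nth // cat_take_drop size_takel // ltnW.
Qed.

Lemma leqif_sumn_map (f h : T -> nat) (l : seq T) :
  (forall x, List.In x l -> f x <= h x) ->
  sumn (map f l) <= sumn (map h l) ?= iff (map f l == map h l).
Proof.
elim: l => [|x l IH] le_fh /=; first exact: leqif_refl.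
rewrite eqseq_cons; apply: leqif_add; first by apply/leqif_eq/le_fh; left.
by apply: IH => y l_y; apply: le_fh; right.
Qed.

End Lists.

Section GroupFacts.
Variable G : group.
Local Notation "x * y" := (gmul x y).
Local Notation one := (gone G).
Implicit Types x y g : G.

Lemma gmulrV x : x * ginv x = one.
Proof.
have idem : (x * ginv x) * (x * ginv x) = x * ginv x.
  by rewrite -gmulA (gmulA (ginv x)) gmulV gmul1.
have := congr1 (gmul (ginv (x * ginv x))) idem.
by rewrite gmulA !gmulV gmul1 => ->.
Qed.

Lemma gmulr1 x : x * one = x.
Proof. by rewrite -(gmulV x) gmulA gmulrV gmul1. Qed.

Lemma gmulK x y : ginv x * (x * y) = y.
Proof. by rewrite gmulA gmulV gmul1. Qed.

Lemma ginvK x : ginv (ginv x) = x.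
Proof. by rewrite -(gmulr1 (ginv (ginv x))) -(gmulV x) gmulK. Qed.

Lemma gmul_eq1C x y : x * y = one -> y * x = one.
Proof.
move=> /(congr1 (gmul (ginv x))); rewrite gmulK gmulr1 => ->.
exact: gmulV.
Qed.

Lemma gprod_cat (s t : seq G) : gprod (s ++ t) = gprod s * gprod t.
Proof. by elim: s => [|x s IH] /=; rewrite ?gmul1 // IH gmulA. Qed.

Lemma gprod_rcons (s : seq G) x : gprod (rcons s x) = gprod s * x.
Proof. by rewrite -cats1 gprod_cat /= gmulr1. Qed.

Lemma gprod_flatten (ss : seq (seq G)) : gprod (flatten ss) = gprod (map (@gprod G) ss).
Proof. by elim: ss => [|s ss IH] //=; rewrite gprod_cat IH. Qed.

Lemma gprod_conj g (w : seq G) :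
  gprod (map (fun x => g * (x * ginv g)) w) = g * (gprod w * ginv g).
Proof.
elim: w => [|x w IH] /=; first by rewrite gmul1 gmulrV.
by rewrite IH -!gmulA gmulK.
Qed.

Lemma gprod_rotate g xL xR (mid : seq G) :
  gprod (xL :: rcons mid xR) = g -> gprod (g * (xR * ginv g) * xL :: rcons mid one) = g.
Proof.
rewrite /= !gprod_rcons gmulr1 => prod_g.
have : ginv g * (xL * gprod mid) * xR = one by rewrite -!gmulA prod_g gmulV.
by move/gmul_eq1C => rotated; rewrite -!gmulA rotated gmulr1.
Qed.

Lemma merge_cat (a b : seq G) x y :
  Defs.merge (size a) (a ++ x :: y :: b) = a ++ x * y :: b.
Proof.
rewrite /Defs.merge take_size_cat // !nth_cat ltnn subnn ltnNge leqnSn subSnn /=.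
by rewrite -add2n -drop_drop drop_size_cat //= drop0.
Qed.

Lemma circ_equiv_sym (s t : seq G) : circ_equiv s t -> circ_equiv t s.
Proof. by case=> eq_size eq_nth; split=> // i; rewrite -eq_size => lt_i; rewrite eq_nth. Qed.

Lemma circ_equiv_trans (s t u : seq G) :
  circ_equiv s t -> circ_equiv t u -> circ_equiv s u.
Proof.
case=> eq_st nth_st [eq_tu nth_tu]; split; first by rewrite eq_st.
by move=> i lt_i; rewrite nth_st // nth_tu // -eq_st.
Qed.

Lemma circ_equiv_ends xL xR y z (mid : seq G) :
  circ_equiv (xL :: rcons mid xR) (y :: rcons mid z).
Proof.
split=> [|[|i] //]; rewrite /= ?size_rcons // => lt_i.
by rewrite ltnS in lt_i; rewrite !nth_rcons lt_i.
Qed.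

End GroupFacts.

Section WordLength.
Variables (G : group) (X : G -> Prop).
Local Notation "x * y" := (gmul x y).
Local Notation one := (gone G).
Implicit Types x y g : G.

Lemma is_len_ell x : Mon X x -> is_len X x (ell X x).
Proof.
case=> w [Xw <-].
pose P n := exists w', all_in X w' /\ gprod w' = gprod w /\ size w' = n.
have := @Wf_nat.dec_inh_nat_subset_has_unique_least_element P
  (fun n => Classical_Prop.classic (P n)).
case=> [|m [[Pm min_m] _]]; first by exists (size w), w.
apply: (epsilon_spec (inhabits 0) (is_len X (gprod w))); exists m; split=> // w' Xw' prod_w'.
by apply/leP/min_m; exists w'.
Qed.

Lemma ell_le_size (w : seq G) : all_in X w -> ell X (gprod w) <= size w.
Proof. by move=> Xw; have [_] := @is_len_ell (gprod w) (ex_intro _ w (conj Xw erefl)); apply. Qed.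

Lemma ell_word x : Mon X x -> exists w, all_in X w /\ gprod w = x /\ size w = ell X x.
Proof. by case/is_len_ell. Qed.

Lemma Mon1 : Mon X one.
Proof. by exists [::]. Qed.

Lemma ell1 : ell X one = 0.
Proof. by apply/eqP; rewrite -leqn0; apply: (@ell_le_size [::]). Qed.

Lemma ell_eq0 x : Mon X x -> ell X x = 0 -> x = one.
Proof. by case/ell_word=> [[|y w] [_ [<- <-]]]. Qed.

Lemma word_of_factors (s : seq G) : all_in (Mon X) s ->
  exists w, all_in X w /\ gprod w = gprod s /\ size w = sumn (map (ell X) s).
Proof.
elim: s => [|x s IH] Ms; first by exists [::].
have [|w [Xw [prod_w size_w]]] := IH; first by move=> y s_y; apply: Ms; right.
have [wx [Xwx [prod_wx size_wx]]] := ell_word (Ms x (or_introl erefl)).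
exists (wx ++ w); split; last by rewrite gprod_cat prod_wx prod_w size_cat size_wx size_w.
by move=> y /List.in_app_iff [/Xwx | /Xw].
Qed.

Lemma ell_gprod_le (s : seq G) : all_in (Mon X) s -> ell X (gprod s) <= sumn (map (ell X) s).
Proof. by case/word_of_factors=> w [Xw [<- <-]]; apply: ell_le_size. Qed.

Lemma Mon_gprod (s : seq G) : all_in (Mon X) s -> Mon X (gprod s).
Proof. by case/word_of_factors=> w [Xw [<- _]]; exists w. Qed.

Lemma Mon_mul x y : Mon X x -> Mon X y -> Mon X (x * y).
Proof.
move=> Mx My; have := @Mon_gprod [:: x; y]; rewrite /= gmulr1.
by apply=> z [<- | [<- | []]].
Qed.

Lemma ell_mul_le x y : Mon X x -> Mon X y -> ell X (x * y) <= ell X x + ell X y.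
Proof.
move=> Mx My; have := @ell_gprod_le [:: x; y]; rewrite /= gmulr1 addn0.
by apply=> z [<- | [<- | []]].
Qed.

Hypothesis X_conj : conj_closed X.

Lemma conj_word g (w : seq G) : all_in X w -> all_in X (map (fun x => g * (x * ginv g)) w).
Proof.
move=> Xw _ /List.in_map_iff [x [<- /Xw /(X_conj (ginv g))]].
by rewrite ginvK.
Qed.

Lemma Mon_conj g x : Mon X x -> Mon X (g * (x * ginv g)).
Proof.
case=> w [Xw <-]; exists (map (fun x => g * (x * ginv g)) w).
by split; [apply: conj_word | apply: gprod_conj].
Qed.

Lemma ell_conj_le g x : Mon X x -> ell X (g * (x * ginv g)) <= ell X x.
Proof.
case/ell_word=> w [Xw [<- <-]].
rewrite -gprod_conj -(size_map (fun x => g * (x * ginv g)) w).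
exact/ell_le_size/conj_word.
Qed.

End WordLength.

Section Geodesic.
Variables (G : group) (X : G -> Prop).
Local Notation "x * y" := (gmul x y).
Local Notation one := (gone G).
Implicit Types x y g : G.

Definition geodesic_fact g (s : seq G) :=
  [/\ all_in (Mon X) s, gprod s = g & sumn (map (ell X) s) = ell X g].

Lemma LinFact_geodesic g s : LinFact X g s -> geodesic_fact g s.
Proof. by case. Qed.

Lemma geodesic_merge_cat g (a b : seq G) x y :
  geodesic_fact g (a ++ x :: y :: b) ->
  ell X (x * y) = ell X x + ell X y /\ geodesic_fact g (a ++ x * y :: b).
Proof.
case=> Ms prod_s sum_s.
have Mx : Mon X x by apply/Ms/List.in_app_iff; right; left.
have My : Mon X y by apply/Ms/List.in_app_iff; right; right; left.
have Ms' : all_in (Mon X) (a ++ x * y :: b).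
  move=> z /List.in_app_iff [a_z | [<- | b_z]].
  - by apply/Ms/List.in_app_iff; left.
  - exact: Mon_mul.
  - by apply/Ms/List.in_app_iff; right; right; right.
have prod_s' : gprod (a ++ x * y :: b) = g by rewrite -prod_s !gprod_cat /= -!gmulA.
have := ell_gprod_le Ms'; have := ell_mul_le Mx My.
move: sum_s; rewrite prod_s' !map_cat !sumn_cat /= => sum_s le_xy le_s'.
have ell_xy : ell X (x * y) = ell X x + ell X y by lia.
by split=> //; split=> //; rewrite map_cat sumn_cat /=; lia.
Qed.

Lemma LmapE (s : seq G) : Lmap X s = map Posz (map (ell X) s).
Proof. by rewrite /Lmap -map_comp. Qed.

Lemma nth_Lmap (s : seq G) i : i < size s ->
  nth (gone Zgroup) (Lmap X s) i = Posz (ell X (nth one s i)).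
Proof. by move=> lt_i; rewrite /Lmap (nth_map one). Qed.

Lemma geodesic_merge g i (t : seq G) : geodesic_fact g t -> i.+1 < size t ->
  geodesic_fact g (Defs.merge i t) /\ Lmap X (Defs.merge i t) = Defs.merge i (Lmap X t).
Proof.
move=> geo_t /(split_pair_at one) [a [x [y [b [def_t <-]]]]]; subst t.
have [ell_xy geo'] := geodesic_merge_cat geo_t.
rewrite merge_cat; split=> //.
rewrite /Lmap !map_cat /= -(size_map (fun x => Posz (ell X x) : Zgroup) a) merge_cat.
by rewrite ell_xy PoszD.
Qed.

Lemma fact_le_Lmap g s t : fact_le s t -> geodesic_fact g t ->
  geodesic_fact g s /\ fact_le (Lmap X s) (Lmap X t).
Proof.
elim=> {s t} [s t [i [lt_i ->]] | s | s t u _ IH_st _ IH_tu] geo.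
- have [geo' Lmap_merge] := geodesic_merge geo lt_i; split=> //.
  by apply: rt_step; exists i; rewrite size_map Lmap_merge.
- by split=> //; apply: rt_refl.
- have [geo_t le_tu] := IH_tu geo; have [geo_s le_st] := IH_st geo_t.
  by split=> //; apply: rt_trans le_st le_tu.
Qed.

End Geodesic.

Lemma gprod_Zgen (w : seq Zgroup) : all_in Zgen w -> gprod w = Posz (size w).
Proof.
elim: w => [|x w IH] Zw //=; rewrite IH => [|y w_y]; last by apply: Zw; right.
by rewrite (Zw x (or_introl erefl)) /= -addn1 PoszD GRing.addrC.
Qed.

Lemma gprod_Posz (ns : seq nat) : gprod (map Posz ns : seq Zgroup) = Posz (sumn ns).
Proof. by elim: ns => [|n ns IH] //=; rewrite IH PoszD. Qed.

Lemma is_len_Zgen n : is_len Zgen (Posz n : Zgroup) n.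
Proof.
have Zn : all_in Zgen (nseq n (1%R : Zgroup)) by elim: n => [|n IH] //= y [<- | /IH].
split; last by move=> w Zw; rewrite gprod_Zgen // => -[->].
by exists (nseq n 1%R); rewrite gprod_Zgen // size_nseq.
Qed.

Lemma Mon_Zgen n : Mon Zgen (Posz n : Zgroup).
Proof. by have [[w [Zw [prod_w _]]] _] := is_len_Zgen n; exists w. Qed.

Lemma ell_Zgen n : ell Zgen (Posz n : Zgroup) = n.
Proof.
have [[v [Zv [prod_v size_v]]] min_n] := is_len_Zgen n.
apply/eqP; rewrite eqn_leq; apply/andP; split.
  by rewrite -prod_v -size_v; apply: ell_le_size.
by have [[w [Zw [prod_w <-]]] _] := is_len_ell (Mon_Zgen n); apply: min_n.
Qed.

Lemma Mon_Zgen_Posz (c : seq Zgroup) : all_in (Mon Zgen) c -> c = map Posz (map absz c).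
Proof.
elim: c => [|a c IH] //= Mc; rewrite -IH => [|y c_y]; last by apply: Mc; right.
by case: (Mc a (or_introl erefl)) => w [Zw <-]; rewrite gprod_Zgen.
Qed.

Section LinearFactorizations.
Variables (G : group) (X : G -> Prop).
Local Notation "x * y" := (gmul x y).
Local Notation one := (gone G).
Implicit Types g : G.

Lemma LinFact_Lmap g s : LinFact X g s -> Comp_I (ell X g) (Lmap X s).
Proof.
case=> size_s Ms s_ne1 sum_s prod_s; split.
- by rewrite size_map.
- by move=> _ /List.in_map_iff [x [<- _]]; apply: Mon_Zgen.
- move=> i; rewrite size_map => lt_i.
  have lt_is : i < size s by lia.
  rewrite nth_Lmap // => -[/ell_eq0 s_i1]; apply: (s_ne1 i lt_i).
  exact/s_i1/Ms/In_nth.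
- rewrite /Lmap -map_comp; under eq_map => x do rewrite /= ell_Zgen.
  by rewrite sum_s ell_Zgen.
- by rewrite LmapE gprod_Posz sum_s.
Qed.

Lemma ell_reshape (w : seq G) (ns : seq nat) :
  all_in X w -> ell X (gprod w) = size w -> sumn ns = size w ->
  map (fun p => ell X (gprod p)) (reshape ns w) = ns.
Proof.
move=> Xw geo_w sum_ns; set ps := reshape ns w.
have Xps p : List.In p ps -> all_in X p by move=> ps_p y /(In_reshape sum_ns ps_p) /Xw.
have le_ps := leqif_sumn_map (fun p ps_p => ell_le_size (Xps p ps_p)).
have ge_ps : size w <= sumn (map (fun p => ell X (gprod p)) ps).
  have Mps : all_in (Mon X) (map (@gprod G) ps).
    by move=> _ /List.in_map_iff [p [<- /Xps Xp]]; exists p.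
  rewrite -geo_w -{1}(@reshapeKr _ ns w) ?sum_ns // gprod_flatten.
  by have := ell_gprod_le Mps; rewrite -map_comp.
have shape_ps : map size ps = ns by rewrite -/(shape ps) reshapeKl // sum_ns.
rewrite -[RHS]shape_ps; apply/eqP; rewrite -(le_ps.2) eqn_leq le_ps.1.
by rewrite shape_ps sum_ns ge_ps.
Qed.

Lemma Lmap_surj g c : Mon X g -> Comp_I (ell X g) c -> exists s, LinFact X g s /\ Lmap X s = c.
Proof.
case/ell_word=> w [Xw [prod_w size_w]] [size_c Mc c_ne0 _ prod_c].
set ns := map absz c; have c_ns : c = map Posz ns := Mon_Zgen_Posz Mc.
have sum_ns : sumn ns = size w by move: prod_c; rewrite c_ns gprod_Posz size_w => -[].
set s := map (@gprod G) (reshape ns w).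
have ell_s : map (ell X) s = ns by rewrite -map_comp ell_reshape // prod_w size_w.
have Lmap_s : Lmap X s = c by rewrite LmapE ell_s.
exists s; split=> //; split.
- by move: size_c; rewrite -Lmap_s size_map.
- move=> _ /List.in_map_iff [p [<- ps_p]]; exists p.
  by split=> // y /(In_reshape sum_ns ps_p) /Xw.
- move=> i lt_i s_i1; apply: (c_ne0 i); first by rewrite -Lmap_s size_map.
  by rewrite -Lmap_s nth_Lmap ?s_i1 ?ell1 //; move: lt_i; rewrite size_map; lia.
- by rewrite ell_s sum_ns.
- by rewrite /s -gprod_flatten reshapeKr ?sum_ns.
Qed.

Lemma circ_equiv_Lmap (s t : seq G) : circ_equiv s t -> circ_equiv (Lmap X s) (Lmap X t).
Proof.
case=> eq_size eq_nth; split=> [|i]; first by rewrite !size_map.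
rewrite size_map => lt_i; have lt_is : i < size s by lia.
by rewrite !nth_Lmap -?eq_size // eq_nth.
Qed.

Hypothesis X_conj : conj_closed X.

Lemma LinFact_last1_rep g s : LinFact X g s ->
  exists s', [/\ LinFact X g s', circ_equiv s s' & last one s' = one].
Proof.
case=> size_s Ms s_ne1 sum_s prod_s.
have [xL [mid [xR def_s]]] := split_ends size_s; subst s.
have MxL : Mon X xL by apply: Ms; left.
have MxR : Mon X xR by apply: Ms; right; apply/In_rcons; right.
have Mmid : all_in (Mon X) mid by move=> y mid_y; apply: Ms; right; apply/In_rcons; left.
set s' := g * (xR * ginv g) * xL :: rcons mid one.
have ell_c : ell X (g * (xR * ginv g) * xL) <= ell X xR + ell X xL.
  apply: leq_trans (ell_mul_le (Mon_conj X_conj g MxR) MxL) _.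
  by rewrite leq_add2r ell_conj_le.
have Ms' : all_in (Mon X) s'.
  move=> y [<- | /In_rcons [/Mmid // | <-]]; last exact: Mon1.
  exact: Mon_mul (Mon_conj X_conj g MxR) MxL.
have prod_s' : gprod s' = g := gprod_rotate prod_s.
have equiv_s' := circ_equiv_ends xL xR (g * (xR * ginv g) * xL) one mid.
exists s'; split=> //; last by rewrite /s' /= last_rcons.
split=> //.
- by rewrite /s' /= size_rcons.
- move=> i lt_i; case: equiv_s' => eq_size eq_nth.
  by rewrite -eq_nth ?eq_size //; apply: s_ne1; rewrite eq_size.
- have := ell_gprod_le Ms'; move: sum_s.
  by rewrite prod_s' /s' /= !map_rcons !sumn_rcons ell1; lia.
Qed.

Lemma Lbar_qmap g s : LinFact X g s ->
  Lbar X g (qmap X g s) = qmap Zgen (Posz (ell X g)) (Lmap X s).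
Proof.
move=> s_fact; apply: functional_extensionality => t.
apply: propositional_extensionality; split.
  case=> s' [[_ equiv_s'] [_ [t_comp equiv_t]]]; split=> //.
  exact: circ_equiv_trans (circ_equiv_Lmap equiv_s') equiv_t.
case=> t_comp equiv_t; have [s' [s'_fact equiv_s' last_s']] := LinFact_last1_rep s_fact.
exists s'; split; first by split.
split=> //; split=> //.
exact: circ_equiv_trans (circ_equiv_sym (circ_equiv_Lmap equiv_s')) equiv_t.
Qed.

Lemma Lbar_CircFact g C : CircFact X g C -> Comp_S (ell X g) (Lbar X g C).
Proof.
case=> s [s_fact ->]; exists (Lmap X s).
by split; [apply: LinFact_Lmap | apply: Lbar_qmap].
Qed.

Lemma Lbar_surj g D : Mon X g -> Comp_S (ell X g) D ->
  exists C, CircFact X g C /\ Lbar X g C = D.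
Proof.
move=> Mg [c [c_comp ->]]; have [s [s_fact <-]] := Lmap_surj Mg c_comp.
by exists (qmap X g s); split; [exists s | apply: Lbar_qmap].
Qed.

Lemma Lbar_mono g C D : CircFact X g C -> CircFact X g D -> circ_le C D ->
  circ_le (Lbar X g C) (Lbar X g D).
Proof.
case=> s0 [s0_fact ->] [t0 [t0_fact ->]] [s [t [[s_fact equiv_s] [[t_fact equiv_t] le_st]]]].
rewrite !Lbar_qmap //; exists (Lmap X s), (Lmap X t); split; last split.
- by split; [apply: LinFact_Lmap | apply: circ_equiv_Lmap].
- by split; [apply: LinFact_Lmap | apply: circ_equiv_Lmap].
- by case: (fact_le_Lmap le_st (LinFact_geodesic t_fact)).
Qed.

End LinearFactorizations.

Theorem proposition3p11 (G : group) (X : G -> Prop) (g : G) :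
  conj_closed X -> generates X -> Mon X g ->
  (* L : Fact(G,g,I) -> Comp(Z,n,I) is well defined, surjective, order-preserving *)
  (forall s, LinFact X g s -> Comp_I (ell X g) (Lmap X s)) /\
  (forall c, Comp_I (ell X g) c -> exists s, LinFact X g s /\ Lmap X s = c) /\
  (forall s t, LinFact X g s -> LinFact X g t -> fact_le s t ->
     fact_le (Lmap X s) (Lmap X t)) /\
  (* Lbar : Fact(G,g,S) -> Comp(Z,n,S) is well defined, surjective, order-preserving *)
  (forall C, CircFact X g C -> Comp_S (ell X g) (Lbar X g C)) /\
  (forall D, Comp_S (ell X g) D -> exists C, CircFact X g C /\ Lbar X g C = D) /\
  (forall C D, CircFact X g C -> CircFact X g D -> circ_le C D ->
     circ_le (Lbar X g C) (Lbar X g D)) /\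
  (* Lbar o q = q o L *)
  (forall s, LinFact X g s ->
     Lbar X g (qmap X g s) = qmap Zgen ((Posz (ell X g)) : Zgroup) (Lmap X s)).
Proof.
move=> X_conj _ Mg.
split; first exact: LinFact_Lmap.
split; first by move=> c; apply: Lmap_surj.
split; first by move=> s t _ t_fact /fact_le_Lmap /(_ (LinFact_geodesic t_fact)) [].
split; first exact: Lbar_CircFact.
split; first by move=> D; apply: Lbar_surj.
split; first exact: Lbar_mono.
exact: Lbar_qmap.
Qed.
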